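(* Let $\Gamma$ be a graph and let $f:\Gamma\to\Gamma$ be an irreducible, expanding graph map which is a homotopy equivalence and which is periodic on the vertex set of $\Gamma$ (i.e. $f_V$ is a bijection of $\mathcal{V}\Gamma$). Let $n=|\mathcal{E}\Gamma|$. Then $$(\mathfrak{S}(\Gamma)+1)^{1/n}\le\lambda_f,$$ where $\mathfrak{S}(\Gamma)$ is the stack score of $\Gamma$ and $\lambda_f$ is the leading eigenvalue of the transition matrix of $f$.
   Context: A graph $\Gamma$ is a finite 1-dimensional CW complex (multiple edges and loops allowed) with a chosen orientation on each edge; $\mathcal{V}\Gamma$, $\mathcal{E}\Gamma$ (positively oriented edges), $\mathcal{E}^{\pm}\Gamma$ (both orientations); $\bar e$ is the reverse of $e$, $\iota(e),\tau(e)$ its endpoints. An edge path is a nonempty concatenation $u=e_1\cdots e_k$ with $\tau(e_i)=\iota(e_{i+1})$; $|u|=k$ (no cancellation), and $u$ traverses $e$ if $e$ or $\bar e$ occurs in it. A graph map $f:\Gamma_1\to\Gamma_2$ consists of a vertex map $f_V$ and an edge path $f(e)$ for each $e\in\mathcal{E}^\pm\Gamma_1$ with $\iota(f(e))=f_V(\iota(e))$, $f(\bar e)=\overline{f(e)}$; powers are compositions (concatenating images), and $f$ is regarded as a continuous map. A graph isomorphism is a graph map with $f_V$ bijective restricting to a bijection from $\mathcal{E}^\pm\Gamma_1$ onto the single edges of $\Gamma_2$; $\mathrm{Aut}(G)$ is the group of isomorphisms $G\to G$. The transition matrix $T(f)$ has $(i,j)$ entry the number of times $f(e_i)$ traverses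 $e_j$. $f$ is irreducible if $T(f)$ is irreducible and all vertices have valence $\ge3$; $f$ is expanding if $|f^n(e)|\to\infty$ for every edge $e$. Stack score: for a graph $G$ containing $\Gamma$ as a subgraph with $\mathcal{V}G=\mathcal{V}\Gamma$ and $\psi\in\mathrm{Aut}(G)$, let $\sim_\psi$ be the equivalence relation on $\mathcal{E}\Gamma$ (unoriented edges) generated by $a\sim_\psi\psi(a)$ whenever $\psi(a)$ (unoriented) lies in $\mathcal{E}\Gamma$. $\mathfrak{S}(\Gamma)$ is the minimum over all such $(G,\psi)$ of the number of $\sim_\psi$-classes. *)

From HB Require Import structures.
From mathcomp Require Import all_boot all_order all_algebra all_field.
Set Implicit Arguments. Unset Strict Implicit. Unset Printing Implicit Defensive.
Import Order.TTheory GRing.Theory Num.Theory.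
Local Open Scope ring_scope.

(* A graph Gamma is given by a finite vertex type V, a finite type E of
   positively oriented edges and endpoint maps src (iota) and tgt (tau).
   An oriented edge (element of E^{+-}) is a pair (e, b) : E * bool,
   (e, true) = e and (e, false) = \bar e. *)

Section Graphs.
Variables (V E : finType) (src tgt : E -> V).

Definition orev (x : E * bool) : E * bool := (x.1, ~~ x.2).
Definition oiota (x : E * bool) : V := if x.2 then src x.1 else tgt x.1.
Definition otau (x : E * bool) : V := if x.2 then tgt x.1 else src x.1.

Definition rev_path (p : seq (E * bool)) : seq (E * bool) := rev (map orev p).

Fixpoint walk (u : V) (p : seq (E * bool)) (v : V) : bool :=
  match p with
  | [::] => u == v
  | x :: p' => (oiota x == u) && walk (otau x) p' v
  end.

Definition push (x : E * bool) (s : seq (E * bool)) : seq (E * bool) :=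
  match s with
  | y :: s' => if y == orev x then s' else x :: s
  | [::] => [:: x]
  end.
Definition reduce (p : seq (E * bool)) : seq (E * bool) := foldr push [::] p.

(* A (combinatorial, cellular) map Gamma -> Gamma : a vertex map and, for each
   positive edge e, an edge path image; the image of \bar e is the reverse. *)
Definition oimg (fE : E -> seq (E * bool)) (x : E * bool) : seq (E * bool) :=
  if x.2 then fE x.1 else rev_path (fE x.1).

Definition pimg (fE : E -> seq (E * bool)) (p : seq (E * bool)) :=
  flatten (map (oimg fE) p).

Definition is_graph_map (fV : V -> V) (fE : E -> seq (E * bool)) : Prop :=
  forall e, fE e != [::] /\ walk (fV (src e)) (fE e) (fV (tgt e)).

Definition is_cell_map (fV : V -> V) (fE : E -> seq (E * bool)) : Prop :=
  forall e, walk (fV (src e)) (fE e) (fV (tgt e)).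

(* Homotopy of cellular maps of graphs: vertex tracks gam v from g v to h v
   such that g(e).gam(tau e) and gam(iota e).h(e) are homotopic rel endpoints,
   i.e. have the same free reduction. *)
Definition cell_homotopic (gV : V -> V) (gE : E -> seq (E * bool))
    (hV : V -> V) (hE : E -> seq (E * bool)) : Prop :=
  exists gam : V -> seq (E * bool),
    (forall v, walk (gV v) (gam v) (hV v)) /\
    (forall e, reduce (gE e ++ gam (tgt e)) = reduce (gam (src e) ++ hE e)).

Definition comp_E (gE fE : E -> seq (E * bool)) : E -> seq (E * bool) :=
  fun e => pimg gE (fE e).
Definition id_E : E -> seq (E * bool) := fun e => [:: (e, true)].

Definition is_homotopy_equivalence (fV : V -> V) (fE : E -> seq (E * bool))
  : Prop :=
  exists (gV : V -> V) (gE : E -> seq (E * bool)),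
    is_cell_map gV gE /\
    cell_homotopic (gV \o fV) (comp_E gE fE) id id_E /\
    cell_homotopic (fV \o gV) (comp_E fE gE) id id_E.

Definition fiter (fE : E -> seq (E * bool)) (n : nat) (e : E) :=
  iter n (pimg fE) [:: (e, true)].

Definition expanding (fE : E -> seq (E * bool)) : Prop :=
  forall (e : E) (M : nat), exists N, forall n, (N <= n)%N ->
    (M <= size (fiter fE n e))%N.

Definition transition_matrix (fE : E -> seq (E * bool)) : 'M[algC]_#|E| :=
  \matrix_(i, j) (count (fun x : E * bool => x.1 == enum_val j)
                       (fE (enum_val i)))%:R.

Definition valence (v : V) : nat := #|[set x : E * bool | oiota x == v]|.

Definition irreducible_mx n (A : 'M[algC]_n) : Prop :=
  forall i j, exists k : nat, 0 < (A ^+ k) i j.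

Definition irreducible_map (fE : E -> seq (E * bool)) : Prop :=
  irreducible_mx (transition_matrix fE) /\ forall v : V, (3 <= valence v)%N.

End Graphs.

(* spectral radius: the maximal modulus of a (complex) eigenvalue, i.e. of a
   root of the characteristic polynomial; for an irreducible nonnegative
   matrix this is the Perron-Frobenius (leading) eigenvalue. *)
Definition eigen_list n (A : 'M[algC]_n) : seq algC :=
  sval (closed_field_poly_normal (char_poly A)).
Definition leading_eigenvalue n (A : 'M[algC]_n) : algC :=
  \big[Order.max/0]_(z <- eigen_list A) `|z|.

(* A graph G containing Gamma as a subgraph with the same vertex
   set is given by a finite edge type E' with endpoint maps and an injection
   i : E -> E' preserving endpoints. *)
Definition is_graph_aut (V E' : finType) (srcG tgtG : E' -> V)
    (psiV : V -> V) (psiE : E' * bool -> E' * bool) : Prop :=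
  bijective psiV /\ bijective psiE /\
  (forall x, psiE (orev x) = orev (psiE x)) /\
  (forall x, oiota srcG tgtG (psiE x) = psiV (oiota srcG tgtG x)).

Definition stack_rel (E E' : finType) (i : E -> E')
    (psiE : E' * bool -> E' * bool) : rel E :=
  fun a b => ((psiE (i a, true)).1 == i b) || ((psiE (i b, true)).1 == i a).

Definition num_stack_classes (E E' : finType) (i : E -> E')
    (psiE : E' * bool -> E' * bool) : nat :=
  #|[set [set b | connect (stack_rel i psiE) a b] | a : E]|.

Definition admissible_stack (V E : finType) (src tgt : E -> V) (k : nat)
  : Prop :=
  exists (E' : finType) (srcG tgtG : E' -> V) (i : E -> E')
         (psiV : V -> V) (psiE : E' * bool -> E' * bool),
    injective i /\ (forall e, srcG (i e) = src e /\ tgtG (i e) = tgt e) /\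
    is_graph_aut srcG tgtG psiV psiE /\ num_stack_classes i psiE = k.

Definition is_stack_score (V E : finType) (src tgt : E -> V) (s : nat)
  : Prop :=
  admissible_stack src tgt s /\
  forall k, admissible_stack src tgt k -> (s <= k)%N.

(* Call an edge short if its image is a single edge.  As f is a homotopy
   equivalence that is bijective on vertices, distinct short edges have images
   on distinct edges, so an edge e is determined by the first long edge of its
   chain e, f(e), f^2(e), ... and the number of steps needed to reach it,
   which irreducibility and expansion bound by |E|.  Stacking every chain
   above its long edge embeds Gamma in a graph G with an automorphism that
   lowers each stack by one level; its classes are indexed by long edges, so
   s <= L, the number of long edges.  Conversely, by irreducibility every long
   edge is crossed by some f^k(e) with k < |E|, and each first crossing
   lengthens the next image, so |f^(k|E|)(e)| >= (L+1)^k.  These are row sums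
   of powers of the transition matrix, which by Cayley-Hamilton grow no faster
   than (lambda + eps)^(k|E|); hence (s+1)^(1/|E|) <= (L+1)^(1/|E|) <= lambda. *)

From Pilot Require Import Defs.
From mathcomp Require Import all_boot all_order all_algebra all_field all_fingroup.
From mathcomp Require Import ring zify.
Import Order.TTheory GRing.Theory Num.Theory.

Set Implicit Arguments. Unset Strict Implicit. Unset Printing Implicit Defensive.

(* [path] exports a lemma also called [rev_path]. *)
Local Notation rev_path := Defs.rev_path.

Section FreeReduction.
Variable E : finType.
Implicit Types (x y : E * bool) (s p q : seq (E * bool)).

Fixpoint reduced s : bool :=
  if s is x :: ((y :: _) as s') then (y != orev x) && reduced s' else true.

Definition push_path p s := foldr (@push E) s p.

Lemma orevK : involutive (@orev E).
Proof. by case=> e b; rewrite /orev /= negbK. Qed.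

Lemma reduced_cons x s :
  reduced (x :: s) = (if s is y :: _ then y != orev x else true) && reduced s.
Proof. by case: s. Qed.

Lemma reduced_push x s : reduced s -> reduced (push x s).
Proof.
case: s => [|y s] // hs /=; case: ifP => hy.
  by move: hs; rewrite reduced_cons => /andP[].
by rewrite reduced_cons hy hs.
Qed.

Lemma push_orevK x s : reduced s -> push (orev x) (push x s) = s.
Proof.
case: s => [|y s] /=; first by rewrite orevK eqxx.
case: ifP => [/eqP -> | hy] hs; last by rewrite /= orevK eqxx.
by case: s hs => [|z s] //= /andP [/negbTE ->].
Qed.

Lemma reduced_push_path p s : reduced s -> reduced (push_path p s).
Proof. by elim: p => //= x p IH hs; apply/reduced_push/IH. Qed.

Lemma push_path_cat p q s : push_path (p ++ q) s = push_path p (push_path q s).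
Proof. exact: foldr_cat. Qed.

Lemma push_path_push x p s :
  reduced s -> push_path (push x p) s = push x (push_path p s).
Proof.
case: p => [|y p] //= hs; case: ifP => [/eqP -> | _] //=.
by rewrite -{1}(orevK x) push_orevK // reduced_push_path.
Qed.

Lemma push_path_reduce p s : reduced s -> push_path p s = push_path (reduce p) s.
Proof.
move=> hs; elim: p => //= x p ->.
by rewrite /reduce /= push_path_push.
Qed.

Lemma reduce_eq_push_path p q s :
  reduce p = reduce q -> reduced s -> push_path p s = push_path q s.
Proof. by move=> hpq hs; rewrite push_path_reduce // hpq -push_path_reduce. Qed.

Lemma rev_path_cons x p : rev_path (x :: p) = rev_path p ++ [:: orev x].
Proof. by rewrite /rev_path /= rev_cons cats1. Qed.

Lemma rev_path_cat p q : rev_path (p ++ q) = rev_path q ++ rev_path p.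
Proof. by rewrite /rev_path map_cat rev_cat. Qed.

Lemma rev_pathK : involutive (@rev_path E).
Proof.
move=> p; rewrite /rev_path map_rev revK -map_comp.
by rewrite (eq_map (g := id)) ?map_id // => x /=; rewrite orevK.
Qed.

Lemma size_rev_path p : size (rev_path p) = size p.
Proof. by rewrite /rev_path size_rev size_map. Qed.

Lemma push_path_rev_pathK p s :
  reduced s -> push_path (rev_path p) (push_path p s) = s.
Proof.
move=> hs; elim: p => //= x p IH.
by rewrite rev_path_cons push_path_cat /= push_orevK ?reduced_push_path.
Qed.

Lemma push_path_inj p s t : reduced s -> reduced t ->
  push_path p s = push_path p t -> s = t.
Proof.
move=> hs ht /(congr1 (push_path (rev_path p))).
by rewrite !push_path_rev_pathK.
Qed.

End FreeReduction.

Section HomotopyEquivalence.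
Variables (V E : finType) (src tgt : E -> V).
Implicit Types (fE gE hE : E -> seq (E * bool)).

Lemma cell_homotopic_push_path gE hE (gam : V -> seq (E * bool)) s :
  (forall e, reduce (gE e ++ gam (tgt e)) = reduce (gam (src e) ++ hE e)) ->
  reduced s -> forall e,
  push_path (gE e) (push_path (gam (tgt e)) s) =
  push_path (gam (src e)) (push_path (hE e) s).
Proof. by move=> hgam hs e; rewrite -!push_path_cat; apply: reduce_eq_push_path. Qed.

Lemma oimg_orev fE x : oimg fE (orev x) = rev_path (oimg fE x).
Proof. by case: x => e [] //=; rewrite /oimg /= rev_pathK. Qed.

Lemma walk_single_image fV fE e x :
  is_graph_map src tgt fV fE -> fE e = [:: x] ->
  oiota src tgt x = fV (src e) /\ otau src tgt x = fV (tgt e).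
Proof. by move=> hf he; have := (hf e).2; rewrite he /= => /andP [/eqP -> /eqP ->]. Qed.

(* A homotopy inverse g gives g(f(e)) ~ e rel the vertex tracks, and reduced
   words act freely on reduced words, so f(e) determines e. *)
Lemma short_image_inj fV fE :
  is_graph_map src tgt fV fE -> injective fV ->
  is_homotopy_equivalence src tgt fV fE ->
  forall a b y y', fE a = [:: y] -> fE b = [:: y'] -> y.1 = y'.1 -> a = b.
Proof.
move=> hf hV [gV [gE [_ [[gam [_ hgam]] _]]]] a b [e c] [e' c'] ha hb /= eqe; subst e'.
have hpush := cell_homotopic_push_path hgam.
have [sa ta] := walk_single_image hf ha; have [sb tb] := walk_single_image hf hb.
have [hc | /negPf hc] := eqVneq c' c; first subst c'.
  have es : src a = src b by apply: hV; rewrite -sa -sb.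
  have et : tgt a = tgt b by apply: hV; rewrite -ta -tb.
  have h := hpush [::] erefl a.
  rewrite /comp_E ha -hb es et hpush // in h.
  by move/push_path_inj: h => /(_ erefl erefl) [->].
have hc' : c' = ~~ c by move: hc; case: (c); case: (c').
have hb' : fE b = [:: orev (e, c)] by rewrite hb hc'.
have es : src b = tgt a.
  by apply: hV; rewrite -sb -ta hc'; case: (c).
have et : tgt b = src a.
  by apply: hV; rewrite -tb -sa hc'; case: (c).
have h1 := hpush [:: (a, false)] erefl a.
have h2 := hpush [::] erefl b.
rewrite /comp_E /pimg ha hb' /= !cats0 oimg_orev es et eqxx in h1 h2.
rewrite -h1 push_path_rev_pathK ?reduced_push_path // in h2.
by move/push_path_inj: h2 => /(_ erefl erefl).
Qed.

End HomotopyEquivalence.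

Section PathImages.
Variables (E : finType) (fE : E -> seq (E * bool)).
Implicit Types (x : E * bool) (p q : seq (E * bool)).

Definition traversals (y : E) p := count (fun x => x.1 == y) p.
Definition traverses (y : E) p := has (fun x => x.1 == y) p.

Lemma traversals_rev_path y p : traversals y (rev_path p) = traversals y p.
Proof. by rewrite /traversals count_rev count_map. Qed.

Lemma traversals_oimg y x : traversals y (oimg fE x) = traversals y (fE x.1).
Proof. by rewrite /oimg; case: ifP => // _; rewrite traversals_rev_path. Qed.

Lemma size_oimg x : size (oimg fE x) = size (fE x.1).
Proof. by rewrite /oimg; case: ifP => // _; rewrite size_rev_path. Qed.

Lemma pimg_cons x p : pimg fE (x :: p) = oimg fE x ++ pimg fE p.
Proof. by []. Qed.

Lemma pimg_cat p q : pimg fE (p ++ q) = pimg fE p ++ pimg fE q.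
Proof. by rewrite /pimg map_cat flatten_cat. Qed.

Lemma pimg_rev_path p : pimg fE (rev_path p) = rev_path (pimg fE p).
Proof.
elim: p => [|x p IH] //.
by rewrite rev_path_cons pimg_cat IH !pimg_cons rev_path_cat cats0 oimg_orev.
Qed.

Lemma traversals_pimg y p : traversals y (pimg fE p) = \sum_(x <- p) traversals y (fE x.1).
Proof.
elim: p => [|x p IH]; first by rewrite big_nil.
by rewrite pimg_cons big_cons -IH -traversals_oimg; apply: count_cat.
Qed.

Lemma size_pimg p : size (pimg fE p) = \sum_(x <- p) size (fE x.1).
Proof.
elim: p => [|x p IH]; first by rewrite big_nil.
by rewrite pimg_cons size_cat size_oimg IH big_cons.
Qed.

Lemma traverses_pimg y p : traverses y (pimg fE p) = has (fun x => traverses y (fE x.1)) p.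
Proof.
elim: p => [|x p IH] //.
rewrite pimg_cons /= -IH /traverses has_cat !has_count.
by have := traversals_oimg y x; rewrite /traversals => ->.
Qed.

Lemma fiterS k e : fiter fE k.+1 e = pimg fE (fiter fE k e).
Proof. by []. Qed.

Lemma iter_pimg_cat m p q :
  iter m (pimg fE) (p ++ q) = iter m (pimg fE) p ++ iter m (pimg fE) q.
Proof. by elim: m => //= m ->; rewrite pimg_cat. Qed.

Lemma size_iter_pimg1 m x : size (iter m (pimg fE) [:: x]) = size (fiter fE m x.1).
Proof.
case: x => e [] //; rewrite -[[:: (e, false)]]/(rev_path [:: (e, true)]).
have iter_rev q : iter m (pimg fE) (rev_path q) = rev_path (iter m (pimg fE) q).
  by elim: m => //= m ->; rewrite pimg_rev_path.
by rewrite iter_rev size_rev_path.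
Qed.

Lemma sum_traversals_mul p (F : E -> nat) :
  (\sum_(l < #|E|) traversals (enum_val l) p * F (enum_val l))%N = (\sum_(x <- p) F x.1)%N.
Proof.
elim: p => [|x p IH]; first by rewrite big_nil big1 // => l _; rewrite mul0n.
rewrite big_cons -IH /traversals /=.
under eq_bigr do rewrite mulnDl.
rewrite big_split /= (bigD1 (enum_rank x.1)) //= enum_rankK eqxx mul1n.
rewrite big1 ?addn0 // => l hl; case: eqP => // hx.
by rewrite hx enum_valK eqxx in hl.
Qed.

Local Open Scope ring_scope.

Lemma transition_matrixX_entry k (i j : 'I_#|E|) :
  (transition_matrix fE ^+ k) i j = (traversals (enum_val j) (fiter fE k (enum_val i)))%:R.
Proof.
elim: k i j => [|k IH] i j.
  rewrite expr0 mxE /fiter /= /traversals /= addn0 (inj_eq enum_val_inj).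
  by case: eqP.
rewrite exprSr -mulmxE mxE.
under eq_bigr do rewrite IH mxE -natrM.
rewrite -natr_sum (sum_traversals_mul _ (fun e => traversals (enum_val j) (fE e))).
by rewrite fiterS traversals_pimg.
Qed.

Lemma transition_matrixX_row_sum k (i : 'I_#|E|) :
  \sum_j (transition_matrix fE ^+ k) i j = (size (fiter fE k (enum_val i)))%:R.
Proof.
under eq_bigr do rewrite transition_matrixX_entry.
rewrite -natr_sum -sum1_size -(sum_traversals_mul _ (fun=> 1%N)).
by under [in RHS]eq_bigr do rewrite muln1.
Qed.

Lemma irreducible_traverses :
  irreducible_mx (transition_matrix fE) -> forall e y, exists k, traverses y (fiter fE k e).
Proof.
move=> hirr e y; have [k] := hirr (enum_rank e) (enum_rank y).
by rewrite transition_matrixX_entry !enum_rankK ltr0n -has_count; exists k.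
Qed.

Local Close Scope ring_scope.

Section Reachability.
Variable e : E.

Definition image_closure (S : {set E}) : {set E} :=
  e |: [set y | [exists x in S, traverses y (fE x)]].

Lemma image_closure_mono : {homo image_closure : X Y / X \subset Y}.
Proof.
move=> X Y hXY; apply/subsetP => y; rewrite !inE => /predU1P [->|]; first by rewrite eqxx.
move=> /existsP [x /andP [hx hy]]; apply/orP; right; apply/existsP; exists x.
by rewrite hy andbT (subsetP hXY).
Qed.

Lemma traverses_iter_image_closure k y :
  traverses y (fiter fE k e) -> y \in iter k.+1 image_closure set0.
Proof.
elim: k y => [|k IH] y.
  by rewrite /traverses /= orbF => /eqP <-; rewrite setU11.
rewrite fiterS traverses_pimg => /hasP [x hx hy].
rewrite inE; apply/orP; right; rewrite inE; apply/existsP; exists x.1.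
by rewrite hy andbT; apply: IH; apply/hasP; exists x.
Qed.

Lemma iter_image_closure_traverses m y : y \in iter m image_closure set0 ->
  exists2 j, (j < m)%N & traverses y (fiter fE j e).
Proof.
elim: m y => [|m IH] y; first by rewrite inE.
rewrite /= !inE => /predU1P [->|/existsP [x /andP [hx hy]]].
  by exists 0%N => //; rewrite /traverses /= eqxx.
have [j hj /hasP [z hz /eqP hzx]] := IH _ hx; exists j.+1 => //.
by rewrite fiterS traverses_pimg; apply/hasP; exists z; rewrite ?hzx.
Qed.

Lemma traverses_fiter_lt_card k y : traverses y (fiter fE k e) ->
  exists2 j, (j < #|E|)%N & traverses y (fiter fE j e).
Proof.
move=> /traverses_iter_image_closure hy; apply: iter_image_closure_traverses.
exact: subsetP (iter_sub_fix image_closure_mono k.+1) _ hy.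
Qed.

End Reachability.
End PathImages.

Section Growth.
Variables (E : finType) (fE : E -> seq (E * bool)).
Hypothesis fE_neq0 : forall e, fE e != [::].

Definition short (e : E) := size (fE e) == 1%N.
Local Notation long_edges := [set y | ~~ short y].

Lemma size_pimg_ge p : (size p + count (fun x => ~~ short x.1) p <= size (pimg fE p))%N.
Proof.
rewrite size_pimg; elim: p => [|x p IH]; first by rewrite big_nil.
have hx : (1 + ~~ short x.1 <= size (fE x.1))%N.
  by move: (fE_neq0 x.1); rewrite /short -size_eq0; case: size => [|[|]].
rewrite big_cons /=; move: hx IH; set b := ~~ short _; lia.
Qed.

Lemma card_long_traversed p :
  (#|[set y | ~~ short y & traverses y p]| <= count (fun x => ~~ short x.1) p)%N.
Proof.
rewrite -size_filter -(size_map fst); apply: leq_trans (card_size _).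
apply/subset_leq_card/subsetP => y; rewrite inE => /andP [hy /hasP [x hx /eqP hxy]].
by apply/mapP; exists x; rewrite ?mem_filter ?hxy ?hy.
Qed.

Hypothesis reaches : forall e y, exists k, traverses y (fiter fE k e).

(* Each long edge crossed for the first time by f^k(e) adds at least one edge
   to f^(k+1)(e). *)
Lemma size_fiter_card_long e : (#|long_edges| + 1 <= size (fiter fE #|E| e))%N.
Proof.
pose seen k := [set y | ~~ short y & [exists j : 'I_k, traverses y (fiter fE j e)]].
have seen_le k : (#|seen k| + 1 <= size (fiter fE k e))%N.
  elim: k => [|k IH].
    by rewrite (_ : seen 0%N = set0) ?cards0 //; apply/setP => y; rewrite !inE;
       case: (~~ short y) => //=; apply/existsP => -[[]].
  apply: leq_trans (size_pimg_ge _); apply: leq_trans (leq_add IH (card_long_traversed _)).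
  rewrite addnAC leq_add2r; apply: leq_trans (leq_card_setU (seen k) _).
  apply/subset_leq_card/subsetP => y; rewrite !inE => /andP [-> /existsP [j hj]] /=.
  have [hjk|hjk] := ltnP j k; first by apply/orP; left; apply/existsP; exists (Ordinal hjk).
  have ejk : nat_of_ord j = k by apply/eqP; rewrite eqn_leq hjk -ltnS ltn_ord.
  by rewrite -ejk hj orbT.
apply: leq_trans (seen_le #|E|); rewrite leq_add2r; apply/subset_leq_card/subsetP => y.
rewrite !inE => ->; have [k /traverses_fiter_lt_card [j hj hyj]] := reaches e y.
by apply/existsP; exists (Ordinal hj).
Qed.

Lemma size_iter_pimg_ge p :
  ((#|long_edges| + 1) * size p <= size (iter #|E| (pimg fE) p))%N.
Proof.
elim: p => [|x p IH]; first by rewrite muln0.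
rewrite -cat1s iter_pimg_cat !size_cat mulnS.
apply: leq_add; last exact: IH.
by rewrite size_iter_pimg1; apply: size_fiter_card_long.
Qed.

Lemma size_fiter_expn_ge k e :
  ((#|long_edges| + 1) ^ k <= size (fiter fE (k * #|E|) e))%N.
Proof.
elim: k => [|k IH] //; rewrite mulSn /fiter iterD expnS.
by apply: leq_trans (size_iter_pimg_ge _); rewrite leq_mul2l IH orbT.
Qed.

End Growth.

Section ShortChains.
Variables (E : finType) (fE : E -> seq (E * bool)).

Definition image_edge (x : E * bool) := head x (oimg fE x).
Definition chain (e : E) t := iter t image_edge (e, true).

Lemma oimg_short x : short fE x.1 -> oimg fE x = [:: image_edge x].
Proof.
rewrite /short -size_oimg /image_edge.
by case: (oimg fE x) => [|y [|]].
Qed.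

Lemma chain_reaches_long e :
  (forall e, fE e != [::]) -> (forall e y, exists k, traverses y (fiter fE k e)) ->
  expanding fE -> exists2 t, (t < #|E|)%N & ~~ short fE (chain e t).1.
Proof.
move=> fE_neq0 reaches hexp.
(* Otherwise every edge reachable from e, i.e. every edge, is short, and the
   iterates f^k(e) stay single edges. *)
case: (boolP [exists t : 'I_#|E|, ~~ short fE (chain e t).1]) => [/existsP [t ht]|/existsPn hall].
  by exists t.
have short_chain t : (t < #|E|)%N -> short fE (chain e t).1.
  by move=> ht; move: (hall (Ordinal ht)); rewrite negbK.
have fiter_chain k : (k <= #|E|)%N -> fiter fE k e = [:: chain e k].
  elim: k => [|k IH] hk; first by [].
  by rewrite fiterS (IH (ltnW hk)) pimg_cons cats0 oimg_short // short_chain.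
have all_short y : short fE y.
  have [k /traverses_fiter_lt_card [j hj]] := reaches e y.
  by rewrite (fiter_chain _ (ltnW hj)) /traverses /= orbF => /eqP <-; apply: short_chain.
have size_fiter k : size (fiter fE k e) = 1%N.
  elim: k => [|k IH]; first by [].
  rewrite fiterS size_pimg.
  by under eq_bigr do rewrite (eqP (all_short _)); rewrite sum1_size.
by have [N /(_ N (leqnn N))] := hexp e 2%N; rewrite size_fiter.
Qed.

End ShortChains.

Section StackGraph.
Variables (V E : finType) (src tgt : E -> V) (fV : V -> V) (fE : E -> seq (E * bool)).
Hypothesis graph_map : is_graph_map src tgt fV fE.
Hypothesis fE_short_inj :
  forall a b y y', fE a = [:: y] -> fE b = [:: y'] -> y.1 = y'.1 -> a = b.
Hypothesis chain_long : forall e, exists2 t, (t < #|E|)%N & ~~ short fE (chain fE e t).1.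

Local Notation short := (short fE).
Local Notation image_edge := (image_edge fE).
Local Notation chain := (chain fE).

Lemma oiota_orev x : oiota src tgt (orev x) = otau src tgt x.
Proof. by case: x => ? []. Qed.

Lemma otau_orev x : otau src tgt (orev x) = oiota src tgt x.
Proof. by case: x => ? []. Qed.

Lemma image_edge_orev x : short x.1 -> image_edge (orev x) = orev (image_edge x).
Proof.
move=> hs; have := oimg_short (x := orev x) hs.
by rewrite oimg_orev (oimg_short hs) => -[<-].
Qed.

Lemma image_edge_ends x : short x.1 ->
  oiota src tgt (image_edge x) = fV (oiota src tgt x) /\
  otau src tgt (image_edge x) = fV (otau src tgt x).
Proof.
case: x => e b hs.
have [hi ht] := walk_single_image graph_map (oimg_short (x := (e, true)) hs).
case: b hs => hs //.
by rewrite -[(e, false)]/(orev (e, true)) image_edge_orev // oiota_orev otau_orev.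
Qed.

Lemma image_edge_fst_inj x x' : short x.1 -> short x'.1 ->
  (image_edge x).1 = (image_edge x').1 -> x.1 = x'.1.
Proof.
have fst_true z : short z.1 -> (image_edge z).1 = (image_edge (z.1, true)).1.
  by case: z => e [] // hs; rewrite -[(e, false)]/(orev (e, true)) image_edge_orev.
move=> hs hs'; rewrite (fst_true x) // (fst_true x') //.
by apply: fE_short_inj; apply: (oimg_short (x := (_, true))).
Qed.

Lemma exists_long_in_chain e : exists t, ~~ short (chain e t).1.
Proof. by have [t _ ht] := chain_long e; exists t. Qed.

Definition depth e := ex_minn (exists_long_in_chain e).
Definition top e := chain e (depth e).

Lemma long_top e : ~~ short (top e).1.
Proof. by rewrite /top /depth; case: ex_minnP. Qed.

Lemma depth_le e t : ~~ short (chain e t).1 -> (depth e <= t)%N.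
Proof. by rewrite /depth; case: ex_minnP => d _ h /h. Qed.

Lemma depth_lt_card e : (depth e < #|E|)%N.
Proof. by have [t ht /depth_le hd] := chain_long e; apply: leq_ltn_trans ht. Qed.

Lemma short_chain_lt_depth e t : (t < depth e)%N -> short (chain e t).1.
Proof. by apply: contraTT => /depth_le; rewrite leqNgt. Qed.

Lemma depth_gt0 e : short e -> (0 < depth e)%N.
Proof.
move=> hs; rewrite lt0n; apply/negP => /eqP h0.
by have := long_top e; rewrite /top h0 hs.
Qed.

Definition next e := (image_edge (e, true)).1.

Lemma chain_next e t : short e -> (t < depth e)%N -> (chain (next e) t).1 = (chain e t.+1).1.
Proof.
move=> hs ht; rewrite /chain /next iterSr.
case he : (image_edge (e, true)) => [e' []] //.
have iter_orev z u : (forall v, (v < u)%N -> short (iter v image_edge z).1) ->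
    iter u image_edge (orev z) = orev (iter u image_edge z).
  elim: u => [|u IH] // hu /=.
  by rewrite IH ?image_edge_orev // => [|v hv]; apply: hu => //; apply: ltnW.
rewrite -[(e', true)]/(orev (e', false)) iter_orev // => v hv.
by have := short_chain_lt_depth (leq_ltn_trans hv ht); rewrite /chain iterSr he.
Qed.

Lemma depth_next e : short e -> depth (next e) = (depth e).-1.
Proof.
move=> hs; have d0 := depth_gt0 hs.
apply/eqP; rewrite eqn_leq; apply/andP; split.
  by apply: depth_le; rewrite chain_next ?prednK //; apply: long_top.
rewrite -ltnS prednK //; case: (ltnP (depth (next e)) (depth e)) => [h|h]; last exact: ltnW.
by apply: depth_le; rewrite -chain_next //; apply: long_top.
Qed.

Lemma top_next e : short e -> (top (next e)).1 = (top e).1.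
Proof.
move=> hs; have d0 := depth_gt0 hs.
by rewrite /top depth_next // chain_next ?prednK.
Qed.

Lemma chain_ends e t : (t <= depth e)%N ->
  oiota src tgt (chain e t) = iter t fV (src e) /\
  otau src tgt (chain e t) = iter t fV (tgt e).
Proof.
elim: t => [|t IH] ht //; have [hi ht'] := IH (ltnW ht).
have [ki kt] := image_edge_ends (short_chain_lt_depth ht).
by rewrite /chain iterS -/(chain e t) ki kt hi ht'.
Qed.

Lemma depth_top_inj t e e' : depth e = t -> depth e' = t -> (top e).1 = (top e').1 -> e = e'.
Proof.
elim: t e e' => [|t IH] e e' h h' he; first by move: he; rewrite /top h h'.
have hs : short e by have := @short_chain_lt_depth e 0; rewrite h; apply.
have hs' : short e' by have := @short_chain_lt_depth e' 0; rewrite h'; apply.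
apply: (image_edge_fst_inj (x := (e, true)) (x' := (e', true))) => //.
by apply: IH; rewrite ?depth_next ?top_next ?h ?h'.
Qed.

Variable m : nat.
Hypothesis fV_period : forall v, iter m.+1 fV v = v.
Hypothesis card_lt_period : (#|E| < m.+1)%N.
Local Notation M := m.+1.

Lemma depth_lt_period e : (depth e < M)%N.
Proof. exact: ltn_trans (depth_lt_card e) card_lt_period. Qed.

(* G has the edges E * 'I_M, (r, j) being level j of the stack over the long
   edge r: it is oriented by [stack_sign] (arbitrarily at levels holding no
   edge of Gamma) and its endpoints are those of r pulled back by fV^j, since
   [iter (M - j) fV] inverts [iter j fV].  The edge e of Gamma sits at level
   [depth e] over [top e], and psi lowers every level by one (cyclically),
   acting as fV on vertices. *)
Definition stack_edge e : E * 'I_M := ((top e).1, inord (depth e)).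

Lemma stack_edge_inj : injective stack_edge.
Proof.
move=> e e' [htop hd]; apply: (depth_top_inj _ erefl) htop.
by have := congr1 val hd; rewrite /= !inordK ?depth_lt_period.
Qed.

Definition stack_sign (rj : E * 'I_M) : bool :=
  if [pick e | stack_edge e == rj] is Some e then (top e).2 else true.

Lemma stack_sign_edge e : stack_sign (stack_edge e) = (top e).2.
Proof.
rewrite /stack_sign; case: pickP => [e' /eqP /stack_edge_inj -> //|].
by move=> /(_ e); rewrite eqxx.
Qed.

Definition stack_src (rj : E * 'I_M) :=
  iter (M - rj.2) fV (oiota src tgt (rj.1, stack_sign rj)).
Definition stack_tgt (rj : E * 'I_M) :=
  iter (M - rj.2) fV (otau src tgt (rj.1, stack_sign rj)).

Lemma stack_edge_ends e : stack_src (stack_edge e) = src e /\ stack_tgt (stack_edge e) = tgt e.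
Proof.
have iter_back v : iter (M - depth e) fV (iter (depth e) fV v) = v.
  by rewrite -iterD subnK ?fV_period // ltnW // depth_lt_period.
rewrite /stack_src /stack_tgt stack_sign_edge /= inordK ?depth_lt_period //.
have [hi ht] := @chain_ends e (depth e) (leqnn _).
by rewrite -surjective_pairing -/(top e) hi ht !iter_back.
Qed.

Definition stack_shift (x : (E * 'I_M) * bool) : (E * 'I_M) * bool :=
  ((x.1.1, ord_pred x.1.2), (x.2 == stack_sign x.1) == stack_sign (x.1.1, ord_pred x.1.2)).

Lemma stack_shift_bij : bijective stack_shift.
Proof.
pose unshift (x : (E * 'I_M) * bool) :=
  ((x.1.1, ordS x.1.2), (x.2 == stack_sign x.1) == stack_sign (x.1.1, ordS x.1.2)).
have eqbK (a b c : bool) : (((a == b) == c) == c) == b = a by case: a; case: b; case: c.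
by exists unshift => [[[r j] d]|[[r j] d]]; rewrite /stack_shift /unshift /= ?ord_predK ?ordSK eqbK.
Qed.

Lemma stack_shift_orev x : stack_shift (orev x) = orev (stack_shift x).
Proof.
case: x => [[r j] d]; rewrite /stack_shift /orev /=; congr (_, _).
by case: d; case: (stack_sign _); case: (stack_sign _).
Qed.

Lemma ord_pred_val (j : 'I_M) : val (ord_pred j) = if val j == 0%N then m else (val j).-1.
Proof.
case: j => [[|j] hj] /=; first by rewrite modn_small.
by rewrite modnDr modn_small // ltnW.
Qed.

Lemma iter_ord_pred (j : 'I_M) v : iter (M - ord_pred j) fV v = fV (iter (M - j) fV v).
Proof.
rewrite ord_pred_val; case: j => [[|j] hj] /=.
  by rewrite subSnn -[fV (iter m fV v)]/(iter m.+1 fV v) fV_period.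
by rewrite subSS subSn //; lia.
Qed.

Lemma stack_shift_oiota x :
  oiota stack_src stack_tgt (stack_shift x) = fV (oiota stack_src stack_tgt x).
Proof.
have oiota_sign r c d :
    (if d then oiota src tgt (r, c) else otau src tgt (r, c)) = oiota src tgt (r, d == c).
  by case: d; case: c.
case: x => [[r j] d]; rewrite /Defs.oiota /stack_shift /stack_src /stack_tgt /=.
rewrite -!fun_if !oiota_sign iter_ord_pred.
by case: d; case: (stack_sign _); case: (stack_sign _).
Qed.

Lemma stack_shift_edge e : short e -> (stack_shift (stack_edge e, true)).1 = stack_edge (next e).
Proof.
move=> hs; have d0 := depth_gt0 hs.
rewrite /stack_shift /stack_edge /= top_next // depth_next //; congr (_, _).
apply: val_inj; rewrite ord_pred_val /= !inordK ?depth_lt_period //.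
  by rewrite (negbTE (lt0n_neq0 d0)).
exact: leq_ltn_trans (leq_pred _) (depth_lt_period e).
Qed.

Lemma connect_top e : connect (stack_rel stack_edge stack_shift) e (top e).1.
Proof.
move: {2}(depth e) (erefl (depth e)) => t; elim: t e => [|t IH] e h.
  by rewrite /top h.
have hs : short e by have := @short_chain_lt_depth e 0; rewrite h; apply.
apply: (@connect_trans _ _ (next e)).
  by apply: connect1; rewrite /stack_rel stack_shift_edge // eqxx.
by rewrite -top_next //; apply: IH; rewrite depth_next // h.
Qed.

Lemma num_stack_classes_le :
  (num_stack_classes stack_edge stack_shift <= #|[set y | ~~ short y]|)%N.
Proof.
set R := stack_rel stack_edge stack_shift.
have symR : connect_sym R by apply: sym_connect_sym => a b; rewrite /R /stack_rel orbC.
apply: leq_trans (leq_imset_card (fun a => [set b | connect R a b]) _).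
apply/subset_leq_card/subsetP => _ /imsetP [a _ ->].
apply/imsetP; exists (top a).1; first by rewrite inE long_top.
by apply/setP => b; rewrite !inE (same_connect symR (connect_top a)).
Qed.

Lemma admissible_stack_shift : bijective fV ->
  admissible_stack src tgt (num_stack_classes stack_edge stack_shift).
Proof.
move=> fV_bij; exists (E * 'I_M)%type, stack_src, stack_tgt, stack_edge, fV, stack_shift.
split; first exact: stack_edge_inj.
split; first by move=> e; apply: stack_edge_ends.
split=> //; split=> //; split; first exact: stack_shift_bij.
split; [exact: stack_shift_orev | exact: stack_shift_oiota].
Qed.

End StackGraph.

Lemma bijective_iter_period (T : finType) (f : T -> T) N :
  bijective f -> exists m, (forall x, iter m.+1 f x = x) /\ (N < m.+1)%N.
Proof.
move=> /bij_inj f_inj; pose p := perm f_inj.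
have iter_perm k x : iter k f x = (p ^+ k)%g x.
  elim: k => [|k IH]; first by rewrite expg0 perm1.
  by rewrite expgSr permM permE /= IH.
exists (#[p]%g * N.+1).-1; rewrite prednK ?muln_gt0 ?order_gt0 //; split.
  by move=> x; rewrite iter_perm expgM expg_order expg1n perm1.
by apply: leq_pmull; rewrite order_gt0.
Qed.

Section SpectralRadius.
Local Open Scope ring_scope.

Lemma geometric_recurrence_bound (z mu nu C : algC) (u : nat -> algC) :
  0 <= mu -> mu < nu -> `|z| <= mu -> 0 <= C ->
  (forall k, `|u k.+1 - z * u k| <= C * nu ^+ k) ->
  forall k, `|u k| <= (`|u 0| + C / (nu - mu)) * nu ^+ k.
Proof.
move=> mu0 munu zmu C0 hu.
have gap : 0 < nu - mu by rewrite subr_gt0.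
have nu0 : 0 <= nu by apply/ltW/(le_lt_trans mu0).
set D := _ + _.
have D0 : 0 <= D by rewrite addr_ge0 // divr_ge0 // ltW.
have step : C + mu * D <= D * nu.
  rewrite -subr_ge0.
  have -> : D * nu - (C + mu * D) = `|u 0| * (nu - mu).
    by rewrite /D; field; rewrite lt0r_neq0.
  by rewrite mulr_ge0 // ltW.
elim=> [|k IH]; first by rewrite expr0 mulr1 lerDl; apply: divr_ge0 => //; apply: ltW.
rewrite -(subrK (z * u k) (u k.+1)) (le_trans (ler_normD _ _)) //.
rewrite exprS mulrA (le_trans _ (ler_wpM2r (exprn_ge0 k nu0) step)) //.
by rewrite mulrDl lerD // normrM -mulrA ler_pM.
Qed.

Lemma row_sum_annihilated_bound n (A B : 'M[algC]_n.+1) (i : 'I_n.+1)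
    (mu nu : algC) (zs : seq algC) :
  0 <= mu -> mu < nu -> (forall z, z \in zs -> `|z| <= mu) ->
  horner_mx A (\prod_(z <- zs) ('X - z%:P)) *m B = 0 ->
  exists2 C, 0 <= C & forall k, `|\sum_j (A ^+ k *m B) i j| <= C * nu ^+ k.
Proof.
move=> mu0 munu; elim: zs B => [|z zs IH] B hz.
  rewrite big_nil rmorph1 mul1mx => ->; exists 0 => // k.
  by rewrite mulmx0 big1 ?normr0 ?mul0r // => j _; rewrite mxE.
rewrite big_cons mulrC rmorphM /= rmorphB /= horner_mx_X horner_mx_C -mulmxE -mulmxA.
move=> /IH [|C C0 hC]; first by move=> w hw; apply: hz; rewrite inE hw orbT.
pose u k := \sum_j (A ^+ k *m B) i j.
have hu k : `|u k.+1 - z * u k| <= C * nu ^+ k.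
  suff <- : \sum_j (A ^+ k *m ((A - z%:M) *m B)) i j = u k.+1 - z * u k by [].
  rewrite /u mulmxA mulmxBr mul_mx_scalar mulmxBl -scalemxAl exprSr -mulmxE.
  by rewrite mulr_sumr -sumrB; apply: eq_bigr => j _; rewrite !mxE.
exists (`|u 0| + C / (nu - mu)); first by rewrite addr_ge0 ?divr_ge0 // ltW // subr_gt0.
by apply: geometric_recurrence_bound hu => //; apply: hz; rewrite inE eqxx.
Qed.

Lemma bigmax_norm_ge (s : seq algC) :
  0 <= \big[Order.max/0]_(z <- s) `|z| /\
  forall z, z \in s -> `|z| <= \big[Order.max/0]_(z <- s) `|z|.
Proof.
elim: s => [|x s [IH0 IH]]; first by rewrite big_nil.
rewrite big_cons; set m := \big[_/_]_(_ <- _) _.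
have cmp : (`|x| >=< m)%O by rewrite real_comparable ?normr_real ?ger0_real.
rewrite (comparable_maxEgt cmp); case: ifP => hlt.
  split=> // z; rewrite inE => /predU1P [-> //|/IH hz].
  exact: le_trans hz (ltW hlt).
split=> // z; rewrite inE => /predU1P [->|/IH //].
by rewrite real_leNgt ?normr_real ?ger0_real ?hlt.
Qed.

Lemma bernoulli_ler (t : algC) k : 1 <= t -> 1 + k%:R * (t - 1) <= t ^+ k.
Proof.
move=> t1; have d0 : 0 <= t - 1 by rewrite subr_ge0.
elim: k => [|k IH]; first by rewrite mul0r addr0 expr0.
rewrite exprSr; set a := 1 + _ in IH.
have a1 : 1 <= a by rewrite /a lerDl mulr_ge0.
rewrite -natr1 mulrDl mul1r addrA -/a (le_trans _ (ler_wpM2r (le_trans ler01 t1) IH)) //.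
by rewrite -{2}(subrK 1 t) mulrDr mulr1 addrC lerD2r ler_peMl.
Qed.

Lemma exprn_bounded (t C : algC) : 1 <= t -> (forall k, t ^+ k <= C) -> t <= 1.
Proof.
move=> t1 bounded; rewrite real_leNgt ?ger0_real ?(le_trans ler01 t1) //; apply/negP => t_gt1.
have gap : 0 < t - 1 by rewrite subr_gt0.
have C0 : 0 <= C by apply: le_trans (bounded 0%N); rewrite expr0.
set k := Num.bound (C / (t - 1)).
have : C / (t - 1) < k%:R by apply: archi_boundP; rewrite divr_ge0 // ltW.
rewrite ltr_pdivrMr // => hk.
have : C < 1 + k%:R * (t - 1) by apply: lt_le_trans hk _; rewrite lerDr.
by move=> /lt_le_trans /(_ (le_trans (bernoulli_ler k t1) (bounded k))); rewrite ltxx.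
Qed.

(* If all eigenvalues had modulus below the d-th root of R, Cayley-Hamilton
   would bound the row sums of A^(kd) by C nu^(kd) with nu^d < R. *)
Lemma root_le_leading_eigenvalue n (A : 'M[algC]_n) (i : 'I_n) (d : nat) (R : algC) :
  (0 < d)%N -> 1 <= R ->
  (forall k, R ^+ k <= \sum_j (A ^+ (k * d)) i j) ->
  d.-root R <= leading_eigenvalue A.
Proof.
case: n A i => [|n] A i; first by case: i.
move=> d_gt0 R1 hR; have R0 : 0 <= R by apply: le_trans R1.
rewrite /leading_eigenvalue /eigen_list.
case: (closed_field_poly_normal (char_poly A)) => zs /= hzs.
rewrite (monicP (char_poly_monic A)) scale1r in hzs.
have [mu0 hmu] := bigmax_norm_ge zs; set mu := \big[_/_]_(_ <- _) _ in mu0 hmu *.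
set r := d.-root R; have r0 : 0 <= r by rewrite rootC_ge0.
rewrite real_leNgt ?ger0_real //; apply/negP => mu_lt_r.
set nu := (mu + r) / 2; have [mu_lt_nu nu_lt_r] := midf_lt mu_lt_r.
have nu0 : 0 < nu by apply: le_lt_trans mu_lt_nu.
have := row_sum_annihilated_bound (A := A) (B := 1%:M) i mu0 mu_lt_nu hmu.
rewrite mulmx1 -hzs Cayley_Hamilton => /(_ erefl) [C C0 hC].
set q := nu ^+ d; have q0 : 0 < q by rewrite exprn_gt0.
have q_lt_R : q < R by rewrite -(rootCK d_gt0 R) ltrXn2r // -?lt0n ?ltW.
suff : R / q <= 1 by rewrite ler_pdivrMr // mul1r => /(lt_le_trans q_lt_R); rewrite ltxx.
apply: (@exprn_bounded _ C); first by rewrite ler_pdivlMr // mul1r ltW.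
move=> k; rewrite expr_div_n ler_pdivrMr ?exprn_gt0 //.
apply: le_trans (hR k) _; have := hC (k * d)%N.
rewrite mulmx1 ger0_norm ?(le_trans (exprn_ge0 _ R0) (hR k)) //.
by rewrite /q -exprM mulnC.
Qed.

End SpectralRadius.

Local Open Scope ring_scope.

Theorem corollary6p3 (V E : finType) (src tgt : E -> V)
    (fV : V -> V) (fE : E -> seq (E * bool)) (s : nat) :
  (0 < #|V|)%N ->
  is_graph_map src tgt fV fE ->
  irreducible_map src tgt fE ->
  expanding fE ->
  is_homotopy_equivalence src tgt fV fE ->
  bijective fV ->
  is_stack_score src tgt s ->
  (#|E|).-root (s.+1)%:R <= leading_eigenvalue (transition_matrix fE).
Proof.
move=> /card_gt0P [v _] hf [hirr valence_ge3] hexp hhe fV_bij [_ s_min].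
have fE_neq0 e : fE e != [::] by have [] := hf e.
have reaches := irreducible_traverses hirr.
have chain_long e := chain_reaches_long e fE_neq0 reaches hexp.
have short_inj := short_image_inj hf (bij_inj fV_bij) hhe.
have [m [fV_period card_lt_period]] := bijective_iter_period #|E| fV_bij.
set L := #|[set y | ~~ short fE y]|.
have s_le_L : (s <= L)%N.
  apply: leq_trans (num_stack_classes_le chain_long card_lt_period).
  by apply/s_min/admissible_stack_shift.
have /card_gt0P [[e0 _] _] : (0 < valence src tgt v)%N by apply: leq_trans (valence_ge3 v).
have E_gt0 : (0 < #|E|)%N by apply/card_gt0P; exists e0.
apply: le_trans (_ : #|E|.-root L.+1%:R <= _).
  by rewrite ler_rootC // ?ler_nat ?ltnS // nnegrE ler0n.
apply: (root_le_leading_eigenvalue (i := enum_rank e0)) => // [|k]; first by rewrite ler1n.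
rewrite transition_matrixX_row_sum -natrX ler_nat enum_rankK -addn1.
exact: size_fiter_expn_ge.
Qed.
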